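(* Let $\mathbf{n} > 3\mathbf{f}\ge 0$ be integers. For two transaction digests $d_1,d_2$, let $d_j.ois^C$ denote the set of ordering indicators assigned to $d_j$ by correct replicas, and suppose every element of $d_1.ois^C$ is strictly smaller than every element of $d_2.ois^C$. For $j=1,2$, let $S_j$ be a collection of ordering indicators for $d_j$, one from each replica of a set $Q_j$ of at least $\mathbf{n}-\mathbf{f}$ distinct replicas, at most $\mathbf{f}$ of which are Byzantine (arbitrary values), with every value from a correct replica of $Q_j$ lying in $d_j.ois^C$; and let $d_j.AOI$ be the $(\mathbf{f}+1)$-th smallest value of $S_j$. Then $d_1.AOI < d_2.AOI$. (Consequently, since the protocol orders transactions in increasing order of $AOI$, the transaction with digest $d_1$ is ordered before the one with digest $d_2$.)
   Context: Setting: $\mathbf{n}$ replicas, at most $\mathbf{f}$ Byzantine; each replica assigns a numerical ordering indicator to each transaction it receives, correct replicas honestly, Byzantine replicas arbitrarily. The assigned ordering indicator $AOI$ of a transaction is the $(\mathbf{f}+1)$-th smallest value in a committed collection of at least $\mathbf{n}-\mathbf{f}$ ordering indicators for it (at most one per replica). Ordering Linearizability: if all correct ordering indicators of $T_1$ are smaller than all correct ordering indicators of $T_2$, then $T_1$ is ordered before $T_2$. *)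

From HB Require Import structures.
From mathcomp Require Import all_boot all_order all_algebra.
Set Implicit Arguments. Unset Strict Implicit. Unset Printing Implicit Defensive.
Import Order.TTheory GRing.Theory Num.Theory.
Local Open Scope ring_scope.

(* Replicas are 'I_n.  [oc i = Some x] means correct replica i assigned
   ordering indicator x to the digest ([None]: it assigned none).
   [B] is the set of Byzantine replicas. *)

Definition ois_C (R : Type) (n : nat) (B : {set 'I_n}) (oc : 'I_n -> option R)
  (x : R) : Prop := exists2 i : 'I_n, i \notin B & oc i = Some x.

(* The (f+1)-th smallest value (0-based index f of the sorted list) of the
   collection S = { v i | i in Q } (one value per replica of Q, with multiplicity). *)
Definition AOI (R : realDomainType) (n f : nat) (Q : {set 'I_n}) (v : 'I_n -> R) : R :=
  nth 0 (sort <=%R [seq v i | i <- enum Q]) f.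

From HB Require Import structures.
From mathcomp Require Import all_boot all_order all_algebra.
From mathcomp Require Import zify.
Import Order.TTheory GRing.Theory Num.Theory.
Local Open Scope ring_scope.

(* Of the at least n - f values in S_1, at least n - 2f > f are >= AOI_1, so one
   of them comes from a correct replica; likewise f + 1 values of S_2 are
   <= AOI_2, so one of them is correct.  Hence
   AOI_1 <= (correct value for d_1) < (correct value for d_2) <= AOI_2. *)

Section SortedCount.
Context {d : Order.disp_t} {T : orderType d} (x0 : T) {s : seq T} {k : nat}.
Hypotheses (s_sorted : sorted <=%O s) (lt_k_size : (k < size s)%N).

Lemma all_ge_nth_drop : all (>= nth x0 s k)%O (drop k s).
Proof.
have := drop_sorted k s_sorted; rewrite (drop_nth x0 lt_k_size) /=.
by move=> /(order_path_min le_trans); rewrite /= lexx.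
Qed.

Lemma all_le_nth_take : all (<= nth x0 s k)%O (take k.+1 s).
Proof.
have := take_sorted k.+1 s_sorted; rewrite (take_nth x0 lt_k_size) -all_rev.
rewrite -rev_sorted rev_rcons /= => /(order_path_min (rev_trans le_trans)).
by rewrite /= lexx.
Qed.

Lemma count_ge_nth_sorted : (size s - k <= count (>= nth x0 s k)%O s)%N.
Proof.
move: all_ge_nth_drop; rewrite all_count => /eqP count_drop.
by rewrite -[X in count _ X](cat_take_drop k s) count_cat count_drop size_drop leq_addl.
Qed.

Lemma count_le_nth_sorted : (k.+1 <= count (<= nth x0 s k)%O s)%N.
Proof.
move: all_le_nth_take; rewrite all_count (size_takel lt_k_size) => /eqP count_take.
by rewrite -[X in count _ X](cat_take_drop k.+1 s) count_cat count_take leq_addr.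
Qed.
End SortedCount.

Lemma count_enum_card (T : finType) (Q : {pred T}) (P : pred T) :
  count P (enum Q) = #|[set i in Q | P i]|.
Proof.
rewrite -size_filter cardE; apply/perm_size/uniq_perm.
- exact/filter_uniq/enum_uniq.
- exact: enum_uniq.
- by move=> i; rewrite mem_filter !mem_enum inE andbC.
Qed.

Lemma exists_notin_of_card (T : finType) (A B : {set T}) :
  (#|B| < #|A|)%N -> exists2 i, i \in A & i \notin B.
Proof.
move=> lt_BA; apply/subsetPn; apply: contraTN lt_BA => /subset_leq_card.
by rewrite leqNgt.
Qed.

Section AOICount.
Context {R : realDomainType} {n f : nat} {Q : {set 'I_n}} (v : 'I_n -> R).
Hypothesis lt_f_Q : (f < #|Q|)%N.

Let s := sort <=%R [seq v i | i <- enum Q].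

Let s_sorted : sorted <=%R s.
Proof. exact/sort_sorted/le_total. Qed.

Let lt_f_size : (f < size s)%N.
Proof. by rewrite size_sort size_map -cardE. Qed.

Let count_s (P : pred R) : count P s = #|[set i in Q | P (v i)]|.
Proof. by rewrite (permP (permEl (perm_sort _ _))) count_map count_enum_card. Qed.

Lemma card_ge_AOI : (#|Q| - f <= #|[set i in Q | (AOI f Q v <= v i)%R]|)%N.
Proof.
have := count_ge_nth_sorted 0 s_sorted lt_f_size.
by rewrite count_s size_sort size_map -cardE.
Qed.

Lemma card_le_AOI : (f.+1 <= #|[set i in Q | (v i <= AOI f Q v)%R]|)%N.
Proof. by have := count_le_nth_sorted 0 s_sorted lt_f_size; rewrite count_s. Qed.
End AOICount.

Theorem mainTheorem2 (R : realDomainType) (n f : nat) (B : {set 'I_n})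
  (oc1 oc2 : 'I_n -> option R) (Q1 Q2 : {set 'I_n}) (v1 v2 : 'I_n -> R) :
  (3 * f < n)%N ->
  (#|B| <= f)%N ->
  (forall x y : R, ois_C B oc1 x -> ois_C B oc2 y -> x < y) ->
  (n - f <= #|Q1|)%N ->
  (n - f <= #|Q2|)%N ->
  (forall i, i \in Q1 -> i \notin B -> ois_C B oc1 (v1 i)) ->
  (forall i, i \in Q2 -> i \notin B -> ois_C B oc2 (v2 i)) ->
  AOI f Q1 v1 < AOI f Q2 v2.
Proof.
move=> lt_3f_n le_B_f correct_lt le_Q1 le_Q2 correct1 correct2.
have lt_f_Q1 : (f < #|Q1|)%N by lia.
have lt_f_Q2 : (f < #|Q2|)%N by lia.
have [i] : exists2 i, i \in [set i in Q1 | AOI f Q1 v1 <= v1 i] & i \notin B.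
  by apply: exists_notin_of_card; have := card_ge_AOI v1 lt_f_Q1; lia.
rewrite inE => /andP[iQ1 ge_i] iB.
have [j] : exists2 j, j \in [set j in Q2 | v2 j <= AOI f Q2 v2] & j \notin B.
  by apply: exists_notin_of_card; have := card_le_AOI v2 lt_f_Q2; lia.
rewrite inE => /andP[jQ2 le_j] jB.
apply: (le_lt_trans ge_i); apply: (lt_le_trans _ le_j).
exact: correct_lt (correct1 i iQ1 iB) (correct2 j jQ2 jB).
Qed.
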